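(* For $n$ large enough, there are linear trifferent codes of length $n$ and size at least $\tfrac13(9/5)^{n/4}$.
   Context: A linear trifferent code of length $n$ is a linear subspace $C\subseteq\mathbb{F}_3^n$ such that for any three distinct $x,y,z\in C$ there is a coordinate $i$ with $\{x_i,y_i,z_i\}=\mathbb{F}_3$. *)

From Stdlib Require Import Reals.
From mathcomp Require Import all_boot all_algebra.
Set Implicit Arguments. Unset Strict Implicit. Unset Printing Implicit Defensive.
Import GRing.Theory.
Local Open Scope ring_scope.

Definition is_linear_code (n : nat) (C : {set 'rV['F_3]_n}) : Prop :=
  [/\ 0 \in C,
      (forall x y, x \in C -> y \in C -> x + y \in C) &
      (forall (a : 'F_3) x, x \in C -> a *: x \in C)].

Definition is_trifferent (n : nat) (C : {set 'rV['F_3]_n}) : Prop :=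
  forall x y z, x \in C -> y \in C -> z \in C ->
    x != y -> y != z -> x != z ->
    exists i : 'I_n, [set x ord0 i; y ord0 i; z ord0 i] = [set: 'F_3].

From Stdlib Require Import Reals Lra.
From mathcomp Require Import all_boot all_algebra zify.
Set Implicit Arguments. Unset Strict Implicit. Unset Printing Implicit Defensive.
Import GRing.Theory.
Local Open Scope ring_scope.

(* A linear code over F_3 is trifferent as soon as any two of its words a, b
   with a, b, a + b nonzero agree at some coordinate where they are nonzero:
   for distinct x, y, z take a = x - z and b = z - y.  We encode messages
   u in F_3^k by m = n/4 blocks, block t being the tetracode word of u G_t for
   a k x 2 matrix G_t.  When u, v are linearly independent, (u G_t, v G_t) is
   uniformly distributed over (F_3^2)^2, and only 25 of these 81 pairs have
   tetracode words that never agree at a nonzero coordinate.  The bad event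
   for (u, v) is also the bad event for (v, u), (-u, -v) and (-v, -u), so a
   union bound over the fewer than 9^k independent pairs finds a good choice
   of the G_t whenever 9^k (25/81)^m < 4.  Taking k as large as this allows
   gives a code with 3^k >= (3/5) (9/5)^m >= (9/5)^(n/4) / 3 words. *)

Lemma row_free_col_mxP (F : fieldType) k (u v : 'rV[F]_k) :
  reflect (forall a b, a *: u + b *: v = 0 -> a = 0 /\ b = 0) (row_free (col_mx u v)).
Proof.
have mulE (a b : 'M[F]_1) : row_mx a b *m col_mx u v = a 0 0 *: u + b 0 0 *: v.
  by rewrite mul_row_col [a]mx11_scalar [b]mx11_scalar !mul_scalar_mx !mxE !mulr1n.
apply: (iffP idP) => [free a b abz | indep].
  have : row_mx a%:M b%:M *m col_mx u v = 0 *m col_mx u v.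
    by rewrite mulE mul0mx !mxE !mulr1n.
  move/(row_free_inj free)/(congr1 (fun w => (lsubmx w 0 0, rsubmx w 0 0))).
  by rewrite row_mxKl row_mxKr !mxE !mulr1n => -[].
apply: inj_row_free => w; rewrite -[w]hsubmxK mulE => /indep[l0 r0].
by rewrite [lsubmx w]mx11_scalar [rsubmx w]mx11_scalar l0 r0 !raddf0 row_mx0.
Qed.

Lemma row_free_col_mxC (F : fieldType) k (u v : 'rV[F]_k) :
  row_free (col_mx v u) = row_free (col_mx u v).
Proof.
by apply/row_free_col_mxP/row_free_col_mxP => free a b abz;
  have [] := free b a; rewrite 1?addrC.
Qed.

Lemma row_free_col_mxN (F : fieldType) k (u v : 'rV[F]_k) :
  row_free (col_mx (- u) (- v)) = row_free (col_mx u v).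
Proof. by rewrite -(opp_col_mx u v) /row_free mxrank_opp. Qed.

Lemma exists_row_free_col_mx (F : fieldType) k (u : 'rV[F]_k) :
  (1 < k)%N -> u != 0 -> exists v : 'rV_k, row_free (col_mx u v).
Proof.
move=> lt1k u0; pose i0 : 'I_k := Ordinal (ltnW lt1k); pose i1 : 'I_k := Ordinal lt1k.
have [ui0 | ui0] := eqVneq (u 0 i0) 0.
  exists (delta_mx 0 i0); apply/row_free_col_mxP => a b /[dup] abz /rowP/(_ i0).
  rewrite !mxE ui0 !eqxx mulr0 mulr1 add0r => b0; move: abz.
  by rewrite b0 scale0r addr0 => /eqP; rewrite scaler_eq0 (negPf u0) orbF => /eqP.
exists (delta_mx 0 i1); apply/row_free_col_mxP => a b /[dup] abz /rowP/(_ i0).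
rewrite !mxE eqxx /= mulr0 addr0 => /eqP; rewrite mulf_eq0 (negPf ui0) orbF => /eqP a0.
move: abz; rewrite a0 scale0r add0r => /eqP; rewrite scaler_eq0 => /orP[/eqP // | ].
by move/eqP/rowP/(_ i1); rewrite !mxE !eqxx => /eqP; rewrite oner_eq0.
Qed.

Lemma card_mulmx_preimset (F : finFieldType) m k p (A : 'M[F]_(m, k))
    (S : {set 'M[F]_(m, p)}) : row_free A ->
  #|[set M : 'M_(k, p) | A *m M \in S]| =
    (#|S| * #|[set M : 'M_(k, p) | A *m M == 0%R]|)%N.
Proof.
case/row_freeP => B AB.
pose f (M : 'M_(k, p)) := (A *m M, M - B *m (A *m M)).
have fK : cancel f (fun XN => B *m XN.1 + XN.2) by move=> M; rewrite addrC subrK.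
have AfK (X : 'M_(m, p)) (N : 'M_(k, p)) : A *m (B *m X + N) = X + A *m N.
  by rewrite mulmxDr mulmxA AB mul1mx.
rewrite -cardsX -(card_imset _ (can_inj fK)); apply: eq_card => -[X N].
rewrite !inE; apply/imsetP/andP => [[M] | [XS /eqP AN0]].
  rewrite inE => MS [-> ->]; split => //.
  by rewrite mulmxBr mulmxA AB mul1mx subrr.
exists (B *m X + N); first by rewrite inE AfK AN0 addr0.
by rewrite /f AfK AN0 addr0 addrC addKr.
Qed.

Lemma card_mulmx_preimset_exp (F : finFieldType) m k p (A : 'M[F]_(m, k))
    (S : {set 'M[F]_(m, p)}) : row_free A ->
  (#|[set M : 'M_(k, p) | A *m M \in S]| * #|F| ^ (m * p) = #|S| * #|F| ^ (k * p))%N.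
Proof.
move=> free; have := card_mulmx_preimset [set: 'M[F]_(m, p)] free.
have -> : [set M : 'M_(k, p) | A *m M \in setT] = setT by apply/setP => M; rewrite !inE.
rewrite !cardsT !card_mx => card_ker.
by rewrite card_mulmx_preimset // card_ker mulnAC mulnA.
Qed.

Lemma leq_card_bigcup_mult (I T : finType) (P : {pred I}) (A : I -> {set T}) c :
  (forall x, x \in \bigcup_(i in P) A i -> c <= #|[set i in P | x \in A i]|)%N ->
  (c * #|\bigcup_(i in P) A i| <= \sum_(i in P) #|A i|)%N.
Proof.
move=> mult.
have -> : (\sum_(i in P) #|A i| = \sum_x #|[set i in P | x \in A i]|)%N.
  under eq_bigr => i _ do rewrite -sum1_card big_mkcond /=.
  rewrite exchange_big /=; apply: eq_bigr => x _.
  rewrite -sum1_card big_mkcond [RHS]big_mkcond /=.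
  by apply: eq_bigr => i _; rewrite inE; case: (i \in P).
rewrite mulnC -sum_nat_const [X in (_ <= X)%N](bigID (mem (\bigcup_(i in P) A i))) /=.
by rewrite -[X in (X <= _)%N]addn0 leq_add // leq_sum.
Qed.

Lemma F3_cases (a : 'F_3) : [\/ a = 0, a = 1 | a = -1].
Proof.
by case: a => [[|[|[|]]] //= ?]; [apply: Or31 | apply: Or32 | apply: Or33]; apply/val_inj.
Qed.

Lemma F3_eq_oppr (V : lmodType 'F_3) (u : V) : (u == - u) = (u == 0).
Proof. by rewrite -subr_eq0 opprK -mulr2n -scaler_nat scaler_eq0. Qed.

Lemma F3_progression_setT (a d : 'F_3) : d != 0 -> [set a + d; a - d; a] = [set: 'F_3].
Proof.
move=> d0; apply/setP => w; rewrite !inE.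
case: (F3_cases d) d0 => -> // _;
  by case: (F3_cases a) => ->; case: (F3_cases w) => ->.
Qed.

Lemma sum_F3 (F : 'F_3 -> nat) : (\sum_a F a = F 0%R + F 1%R + F (-1)%R)%N.
Proof.
change (\sum_(a < 3) F a = F 0%R + F 1%R + F (-1)%R)%N.
rewrite !big_ord_recl big_ord0 addn0 addnA.
by congr (F _ + F _ + F _)%N; apply/val_inj.
Qed.

Lemma row_free_col_mx_F3 k (u v : 'rV['F_3]_k) :
  row_free (col_mx u v) = [&& u != 0, v != 0, u != v & u != - v].
Proof.
apply/row_free_col_mxP/and4P => [free | [u0 v0 uv uNv] a b].
  have one_free a b : a *: u + b *: v = 0 -> (a == 1) || (b == 1) -> False.
    by move=> /free[-> ->].
  split; apply/eqP => E.
  - by apply: (one_free 1 0); rewrite // E scaler0 scale0r addr0.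
  - by apply: (one_free 0 1); rewrite // E scaler0 scale0r addr0.
  - by apply: (one_free 1 (-1)); rewrite // E scale1r scaleN1r subrr.
  - by apply: (one_free 1 1); rewrite // E !scale1r addNr.
case: (F3_cases a) (F3_cases b) => -> [] ->;
  rewrite ?scale0r ?scale1r ?scaleN1r ?add0r ?addr0 => // /eqP;
  by rewrite ?oppr_eq0 ?subr_eq0 ?addr_eq0 ?eqr_opp ?eqr_oppLR
    ?(negPf u0) ?(negPf v0) ?(negPf uv) ?(negPf uNv).
Qed.

Definition agree_nonzero n (a b : 'rV['F_3]_n) : bool :=
  [exists i, (a 0 i == b 0 i) && (a 0 i != 0)].

Lemma agree_nonzeroC n (a b : 'rV['F_3]_n) : agree_nonzero b a = agree_nonzero a b.
Proof. by apply: eq_existsb => i; rewrite eq_sym; case: eqVneq => // ->. Qed.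

Lemma agree_nonzeroN n (a b : 'rV['F_3]_n) :
  agree_nonzero (- a) (- b) = agree_nonzero a b.
Proof. by apply: eq_existsb => i; rewrite !mxE eqr_opp oppr_eq0. Qed.

Lemma linear_code_trifferent n (C : {set 'rV['F_3]_n}) : is_linear_code C ->
  {in C &, forall a b, a != 0 -> b != 0 -> a != b -> a + b != 0 -> agree_nonzero a b} ->
  is_trifferent C.
Proof.
case=> _ CD CZ agreeC x y z xC yC zC xy yz xz.
have CB a b : a \in C -> b \in C -> a - b \in C by move=> aC bC; rewrite -scaleN1r CD ?CZ.
suff [i [eq_i nz_i]] : exists i, (x - z) 0 i = (z - y) 0 i /\ (x - z) 0 i != 0.
  exists i; move: eq_i nz_i; rewrite !mxE => eq_i nz_i.
  have -> : x 0 i = z 0 i + (x 0 i - z 0 i) by rewrite addrC subrK.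
  have -> : y 0 i = z 0 i - (x 0 i - z 0 i) by rewrite eq_i opprB addrC subrK.
  exact: F3_progression_setT.
have xz0 : x - z != 0 by rewrite subr_eq0.
have [eq_d | neq_d] := eqVneq (x - z) (z - y).
  by have [i nz_i] := rV0Pn _ xz0; exists i; rewrite -eq_d.
have /existsP[i /andP[/eqP eq_i nz_i]] : agree_nonzero (x - z) (z - y).
  apply: agreeC; rewrite ?CB ?xz0 ?neq_d //.
    by rewrite subr_eq0 eq_sym.
  by rewrite addrA subrK subr_eq0.
by exists i.
Qed.

Definition gen_code k n (A : 'M['F_3]_(k, n)) : {set 'rV['F_3]_n} :=
  [set u *m A | u : 'rV_k].

Definition agreeing_gen k n (A : 'M['F_3]_(k, n)) : Prop :=
  forall u v, row_free (col_mx u v) -> agree_nonzero (u *m A) (v *m A).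

Lemma gen_code_linear k n (A : 'M['F_3]_(k, n)) : is_linear_code (gen_code A).
Proof.
split.
- by apply/imsetP; exists 0; rewrite ?mul0mx.
- move=> _ _ /imsetP[u _ ->] /imsetP[v _ ->].
  by apply/imsetP; exists (u + v); rewrite ?mulmxDl.
- by move=> a _ /imsetP[u _ ->]; apply/imsetP; exists (a *: u); rewrite ?scalemxAl.
Qed.

Lemma gen_code_trifferent k n (A : 'M['F_3]_(k, n)) :
  agreeing_gen A -> is_trifferent (gen_code A).
Proof.
move=> agreeA; apply: linear_code_trifferent (gen_code_linear A) _.
move=> _ _ /imsetP[u _ ->] /imsetP[v _ ->] uA0 vA0 uvA uvA0.
apply: agreeA; rewrite row_free_col_mx_F3; apply/and4P; split.
- by apply: contraNneq uA0 => ->; rewrite mul0mx.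
- by apply: contraNneq vA0 => ->; rewrite mul0mx.
- by apply: contraNneq uvA => ->.
- by apply: contraNneq uvA0 => ->; rewrite mulNmx addNr.
Qed.

Lemma card_gen_code k n (A : 'M['F_3]_(k, n)) :
  (1 < k)%N -> agreeing_gen A -> #|gen_code A| = (3 ^ k)%N.
Proof.
move=> lt1k agreeA; rewrite card_imset ?card_mx ?card_Fp ?mul1n // => u w /eqP.
rewrite -subr_eq0 -mulmxBl => /eqP uwA0; apply/eqP; rewrite -subr_eq0.
apply/negP => /negP uw0; have [v free] := exists_row_free_col_mx lt1k uw0.
by have /existsP[i /andP[_]] := agreeA _ _ free; rewrite uwA0 mxE eqxx.
Qed.

Lemma rV2P (R : Type) (p q : 'rV[R]_2) : p 0 0 = q 0 0 -> p 0 1 = q 0 1 -> p = q.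
Proof.
move=> e0 e1; apply/matrixP => i [[|[|//]] lt2]; rewrite [i]ord1.
  by rewrite (_ : Ordinal lt2 = 0) //; apply/val_inj.
by rewrite (_ : Ordinal lt2 = 1) //; apply/val_inj.
Qed.

Definition tetracode : 'M['F_3]_(2, 4) :=
  \matrix_(i, j) (if i == 0 then [:: 1; 0; 1; 1] else [:: 0; 1; 1; -1])`_j.

Definition tetra_word (a b : 'F_3) : seq 'F_3 := [:: a; b; a + b; a - b].

Lemma mul_tetracode (p : 'rV['F_3]_2) j :
  (p *m tetracode) 0 j = (tetra_word (p 0 0) (p 0 1))`_j.
Proof.
rewrite mxE big_ord_recl big_ord1 !mxE /=.
have -> : lift ord0 ord0 = 1 :> 'I_2 by apply/val_inj.
by case: j => [[|[|[|[|]]]] //= _]; rewrite ?mulr1 ?mulr0 ?addr0 ?add0r ?mulrN1.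
Qed.

Definition tetra_apart (p q : 'rV['F_3]_2) : bool :=
  ~~ agree_nonzero (p *m tetracode) (q *m tetracode).

Lemma tetra_apartC p q : tetra_apart q p = tetra_apart p q.
Proof. by rewrite /tetra_apart agree_nonzeroC. Qed.

Lemma tetra_apartN p q : tetra_apart (- p) (- q) = tetra_apart p q.
Proof. by rewrite /tetra_apart !mulNmx agree_nonzeroN. Qed.

Definition tetra_words_apart (a b c d : 'F_3) : bool :=
  ~~ has (fun j => ((tetra_word a b)`_j == (tetra_word c d)`_j) && ((tetra_word a b)`_j != 0))
         (iota 0 4).

Lemma tetra_apartE p q :
  tetra_apart p q = tetra_words_apart (p 0 0) (p 0 1) (q 0 0) (q 0 1).
Proof.
congr (~~ _); apply/existsP/hasP => [[j] | [j]].
  by rewrite !mul_tetracode => agree_j; exists (val j); rewrite ?mem_iota /=.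
by rewrite mem_iota => /andP[_ ltj4] agree_j; exists (Ordinal ltj4); rewrite !mul_tetracode.
Qed.

(* (p, q) is apart exactly when p = 0, q = 0 or p + q = 0: 9 + 9 + 9 - 2 pairs.
   The count is evaluated by expanding sums over 'F_3, since enumerations of
   finite types do not reduce. *)
Lemma card_tetra_apart :
  #|[set X : 'M['F_3]_(1 + 1, 2) | tetra_apart (usubmx X) (dsubmx X)]| = 25%N.
Proof.
pose row2 (a b : 'F_3) : 'rV_2 := \row_j [:: a; b]`_j.
pose entries (X : 'M['F_3]_(1 + 1, 2)) :=
  ((usubmx X 0 0, usubmx X 0 1), (dsubmx X 0 0, dsubmx X 0 1)).
pose of_entries (t : ('F_3 * 'F_3) * ('F_3 * 'F_3)) :=
  col_mx (row2 t.1.1 t.1.2) (row2 t.2.1 t.2.2).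
have entriesK : cancel entries of_entries.
  by move=> X; rewrite -[RHS]vsubmxK; congr col_mx; apply: rV2P; rewrite mxE.
have of_entriesK : cancel of_entries entries.
  by move=> [[a b] [c d]]; rewrite /entries col_mxKu col_mxKd !mxE.
have -> : [set X | tetra_apart (usubmx X) (dsubmx X)] =
          entries @^-1: [pred t | tetra_words_apart t.1.1 t.1.2 t.2.1 t.2.2].
  by apply/setP => X; rewrite !inE tetra_apartE.
rewrite on_card_preimset; last exact/onW_bij/(Bijective entriesK of_entriesK).
have sum_pair (I J : finType) (F : I * J -> nat) :
  (\sum_p F p = \sum_i \sum_j F (i, j))%N by rewrite pair_big; apply: eq_bigr => -[].
rewrite -sum1_card big_mkcond /= sum_pair.
under eq_bigr => x _ do rewrite sum_pair sum_F3.
by rewrite sum_pair !sum_F3; vm_compute.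
Qed.

Lemma card_tetra_apart_mulmx k (u v : 'rV['F_3]_k) : row_free (col_mx u v) ->
  (#|[set M | tetra_apart (u *m M) (v *m M)]| * 81 = 25 * 9 ^ k)%N.
Proof.
move=> free.
have := card_mulmx_preimset_exp [set X | tetra_apart (usubmx X) (dsubmx X)] free.
rewrite card_tetra_apart card_Fp // (eq_card (B := [set M | tetra_apart (u *m M) (v *m M)])).
  by rewrite -[81%N]/(3 ^ ((1 + 1) * 2))%N => ->; rewrite [(k * 2)%N]mulnC expnM.
by move=> M; rewrite !inE mul_col_mx col_mxKu col_mxKd.
Qed.

Definition apart_blocks k m (u v : 'rV['F_3]_k) :=
  [set G : {ffun 'I_m -> 'M['F_3]_(k, 2)} | [forall t, tetra_apart (u *m G t) (v *m G t)]].

Lemma in_apart_blocks k m (u v : 'rV['F_3]_k) G :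
  (G \in apart_blocks m u v) = [forall t, tetra_apart (u *m G t) (v *m G t)].
Proof. by rewrite inE. Qed.

Lemma card_apart_blocks k m (u v : 'rV['F_3]_k) : row_free (col_mx u v) ->
  (#|apart_blocks m u v| * 81 ^ m = (25 * 9 ^ k) ^ m)%N.
Proof.
move=> free; rewrite -(card_tetra_apart_mulmx free) expnMn; congr (_ * _)%N.
rewrite -[m in (_ ^ m)%N]card_ord -card_ffun_on; apply: eq_card => G.
by rewrite !inE; apply/forallP/ffun_onP => apart_G t; have := apart_G t; rewrite inE.
Qed.

(* Rewriting both sides at once makes Coq try to unify the two different sets
   of blocks, which unfolds into very slow computations in 'F_3. *)
Lemma apart_blocksC k m (u v : 'rV['F_3]_k) : apart_blocks m v u = apart_blocks m u v.
Proof.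
apply/setP => G; rewrite [LHS]in_apart_blocks [RHS]in_apart_blocks.
by apply: eq_forallb => t; rewrite tetra_apartC.
Qed.

Lemma apart_blocksN k m (u v : 'rV['F_3]_k) :
  apart_blocks m (- u) (- v) = apart_blocks m u v.
Proof.
apply/setP => G; rewrite [LHS]in_apart_blocks [RHS]in_apart_blocks.
by apply: eq_forallb => t; rewrite !mulNmx tetra_apartN.
Qed.

Definition pair_orbit k (u v : 'rV['F_3]_k) : {set 'rV['F_3]_k * 'rV['F_3]_k} :=
  (u, v) |: ((v, u) |: ((- u, - v) |: [set (- v, - u)])).

Lemma card_pair_orbit k (u v : 'rV['F_3]_k) :
  row_free (col_mx u v) -> #|pair_orbit u v| = 4%N.
Proof.
rewrite row_free_col_mx_F3 => /and4P[u0 v0 uv uNv].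
have vNu : (v == - u) = false by rewrite eq_sym eqr_oppLR (negPf uNv).
rewrite !cardsU1 cards1 !inE !xpair_eqE !F3_eq_oppr eqr_opp.
by rewrite (negPf u0) (negPf uv) (negPf uNv) vNu !andbF.
Qed.

Definition indep_pairs k : {set 'rV['F_3]_k * 'rV['F_3]_k} :=
  [set P | row_free (col_mx P.1 P.2)].

Definition bad_blocks k m := \bigcup_(P in indep_pairs k) apart_blocks m P.1 P.2.

Lemma four_le_card_apart_pairs k m G : G \in bad_blocks k m ->
  (4 <= #|[set P in indep_pairs k | G \in apart_blocks m P.1 P.2]|)%N.
Proof.
case/bigcupP => -[u v]; rewrite inE /= => free Guv.
rewrite -(card_pair_orbit free); apply/subset_leq_card/subsetP => P.
rewrite !in_setU1 in_set1 in_set inE => /or4P[] /eqP-> /=.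
- exact/andP.
- by rewrite row_free_col_mxC apart_blocksC; apply/andP.
- by rewrite row_free_col_mxN apart_blocksN; apply/andP.
- by rewrite row_free_col_mxN row_free_col_mxC apart_blocksN apart_blocksC; apply/andP.
Qed.

Lemma card_bad_blocks k m : (9 ^ k * 25 ^ m < 4 * 81 ^ m)%N ->
  (#|bad_blocks k m| < (9 ^ k) ^ m)%N.
Proof.
move=> ltkm.
have card_indep : (#|indep_pairs k| <= 9 ^ k)%N.
  apply: leq_trans (max_card _) _; rewrite card_prod card_mx card_Fp // mul1n -expnMn.
  by rewrite (_ : 3 * 3 = 9)%N.
have sum_apart : ((\sum_(P in indep_pairs k) #|apart_blocks m P.1 P.2|) * 81 ^ m =
                  #|indep_pairs k| * (25 * 9 ^ k) ^ m)%N.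
  rewrite big_distrl /= -sum_nat_const; apply: eq_bigr => P.
  by rewrite inE; apply: card_apart_blocks.
have := leq_card_bigcup_mult (@four_le_card_apart_pairs k m).
rewrite -(leq_pmul2r (expn_gt0 81 m)) sum_apart expnMn => le_bad.
rewrite -(ltn_pmul2l (_ : 0 < 4 * 81 ^ m)%N) ?muln_gt0 ?expn_gt0 //.
apply: leq_ltn_trans (_ : #|indep_pairs k| * (25 ^ m * (9 ^ k) ^ m) < _)%N.
  by rewrite mulnAC.
rewrite mulnA ltn_pmul2r ?expn_gt0 //.
exact: leq_ltn_trans (leq_mul card_indep (leqnn _)) ltkm.
Qed.

Lemma exists_notin_bad_blocks k m : (9 ^ k * 25 ^ m < 4 * 81 ^ m)%N ->
  exists G : {ffun 'I_m -> 'M['F_3]_(k, 2)}, G \notin bad_blocks k m.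
Proof.
move/card_bad_blocks => lt_bad.
have /set0Pn[G] : ~: bad_blocks k m != set0.
  rewrite -card_gt0 -(ltn_add2l #|bad_blocks k m|) cardsC addn0.
  by rewrite card_ffun card_mx card_Fp // card_ord mulnC expnM (_ : 3 ^ 2 = 9)%N.
by rewrite inE => Gbad; exists G.
Qed.

Definition tetra_gen n k m (G : {ffun 'I_m -> 'M['F_3]_(k, 2)}) : 'M['F_3]_(k, n) :=
  \matrix_(a < k, i < n) if (insub (i %/ 4)%N : option 'I_m) is Some t
                         then (G t *m tetracode) a (inord (i %% 4)) else 0.

Lemma tetra_gen_coord n k m (G : {ffun 'I_m -> 'M['F_3]_(k, 2)}) t j : (4 * m <= n)%N ->
  exists i : 'I_n, forall u : 'rV_k, (u *m tetra_gen n G) 0 i = (u *m G t *m tetracode) 0 j.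
Proof.
move=> le4mn; have lt_n : (t * 4 + j < n)%N by have := ltn_ord t; have := ltn_ord j; lia.
exists (Ordinal lt_n) => u; rewrite -mulmxA !mxE; apply: eq_bigr => a _; rewrite mxE /=.
rewrite divnMDl // divn_small // addn0 valK modnMDl modn_small //.
by rewrite (_ : inord j = j) //; apply/val_inj; rewrite /= inordK.
Qed.

Lemma tetra_gen_agreeing n k m (G : {ffun 'I_m -> 'M['F_3]_(k, 2)}) :
  (4 * m <= n)%N -> G \notin bad_blocks k m -> agreeing_gen (tetra_gen n G).
Proof.
move=> le4mn Gbad u v free.
have : G \notin apart_blocks m u v.
  by apply: contra Gbad => Guv; apply/bigcupP; exists (u, v); first rewrite inE.
rewrite in_apart_blocks negb_forall => /existsP[t]; rewrite negbK => /existsP[j agree_j].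
have [i coord_i] := tetra_gen_coord G t j le4mn.
by apply/existsP; exists i; rewrite !coord_i.
Qed.

Lemma expn5S_lt_expn9 m : (3 <= m)%N -> (5 ^ m.+1 < 9 ^ m)%N.
Proof.
elim: m => // m IH; rewrite leq_eqVlt => /predU1P[<- // | lt2m].
by rewrite expnS [(9 ^ _)%N]expnS ltn_mul // IH.
Qed.

Lemma exists_message_length m : (3 <= m)%N -> exists k,
  [/\ (1 < k)%N, (9 ^ k * 25 ^ m < 4 * 81 ^ m)%N & (3 * 9 ^ m <= 5 * 3 ^ k * 5 ^ m)%N].
Proof.
move=> le3m; pose big_enough k := (3 * 9 ^ m <= 5 * 3 ^ k * 5 ^ m)%N.
have exP : exists k, big_enough k.
  exists (2 * m)%N; rewrite /big_enough expnM (_ : 3 ^ 2 = 9)%N //.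
  by have := expn_gt0 5 m; nia.
case: (ex_minnP exP) => k le_k min_k.
have lt1k : (1 < k)%N.
  rewrite ltnNge; apply/negP => le_k1.
  have : (3 ^ k <= 3)%N by rewrite -[X in (_ <= X)%N]expn1 leq_exp2l.
  have := expn5S_lt_expn9 le3m; rewrite expnS /big_enough in le_k *; nia.
have : ~~ big_enough k.-1 by apply/negP => /min_k; rewrite leqNgt ltn_predL ltnW.
rewrite /big_enough -ltnNge => lt_k.
have lt2 : (3 ^ k * 5 ^ m < 2 * 9 ^ m)%N.
  rewrite -[k](prednK (ltnW lt1k)) expnS; nia.
exists k; split => //.
have := ltn_mul lt2 lt2; rewrite mulnACA -!expnMn mulnACA -expnMn.
by rewrite (_ : 3 * 3 = 9)%N // (_ : 5 * 5 = 25)%N // (_ : 9 * 9 = 81)%N.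
Qed.

Section RealBound.
Local Open Scope R_scope.

Lemma INR_expn (a b : nat) : INR (a ^ b) = INR a ^ b.
Proof. by elim: b => [|b IH] //=; rewrite expnS mulnE mult_INR IH. Qed.

Lemma tetra_rate_bound (n m k : nat) :
  (n < 4 * m.+1)%N -> (3 * 9 ^ m <= 5 * 3 ^ k * 5 ^ m)%N ->
  Rle (Rmult (Rinv (INR 3)) (Rpower (Rdiv (INR 9) (INR 5)) (Rdiv (INR n) (INR 4))))
      (INR (3 ^ k)).
Proof.
move=> lt_n le_k.
have /leP/le_INR : (9 ^ m.+1 <= 3 * 3 ^ k * 5 ^ m.+1)%N by rewrite !expnS; nia.
move/ltP/lt_INR: lt_n; rewrite !mulnE !mult_INR !INR_expn [INR m.+1]S_INR.
have [-> -> -> ->] : [/\ INR 3 = 3, INR 4 = 4, INR 5 = 5 & INR 9 = 9].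
  by split; rewrite INR_IZR_INZ.
move=> lt_n le_pow.
have pow_le : Rpower (9 / 5) (INR n / 4) <= (9 / 5) ^ m.+1.
  rewrite -Rpower_pow; last lra.
  by apply: Rle_Rpower; rewrite ?S_INR; lra.
have pow_div : (9 / 5) ^ m.+1 * 5 ^ m.+1 = 9 ^ m.+1.
  by rewrite -Rpow_mult_distr; congr pow; field.
have pos5 : 0 < 5 ^ m.+1 by apply: pow_lt; lra.
nra.
Qed.

End RealBound.

Local Close Scope ring_scope.

Theorem theorem1p6 :
  exists N : nat, forall n : nat, (N <= n)%N ->
    exists C : {set 'rV['F_3]_n},
      is_linear_code C /\ is_trifferent C /\
      Rle (Rmult (Rinv (INR 3)) (Rpower (Rdiv (INR 9) (INR 5)) (Rdiv (INR n) (INR 4))))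
          (INR #|C|).
Proof.
exists 12 => n le12n; pose m := n %/ 4.
have le3m : 3 <= m by rewrite leq_divRL.
have le4mn : 4 * m <= n by rewrite mulnC leq_trunc_div.
have ltn4m : n < 4 * m.+1 by rewrite mulnC ltn_ceil.
have [k [lt1k ltkm le_k]] := exists_message_length le3m.
have [G Gbad] := exists_notin_bad_blocks ltkm.
have agreeing := tetra_gen_agreeing le4mn Gbad.
exists (gen_code (tetra_gen n G)); split; [|split].
- exact: gen_code_linear.
- exact: gen_code_trifferent.
- by rewrite card_gen_code //; exact: tetra_rate_bound ltn4m le_k.
Qed.
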